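(* Consider the multi-arm multi-stage platform design described in the context, with arbitrary pre-specified adding stages $s(1),\dots,s(K)$, numbers of analyses $J_1,\dots,J_K$, sample sizes and boundaries $l_{k,j}\le u_{k,j}$ (with $l_{k,J_k}=u_{k,J_k}$). For any vector of true means $(\mu_0,\mu_1,\dots,\mu_K)$ (equivalently any $\Theta=(\theta_1,\dots,\theta_K)$ with $\theta_k=\mu_k-\mu_0$), $$P(\text{reject at least one true } H_{0k}\mid \Theta)\;\le\; P(\text{reject at least one true } H_{0k}\mid H_G),$$ where the right-hand side is computed under the global null hypothesis $H_G:\mu_0=\mu_1=\dots=\mu_K$ (under which every $H_{0k}$ is true). In particular, the family-wise error rate is maximised under the global null hypothesis.
   Context: A trial compares $K$ experimental arms with one common control arm (arm $0$). Outcomes on arm $k\in\{0,\dots,K\}$ are independent $N(\mu_k,\sigma^2)$ with $\sigma^2$ known. The control is recruited over stages $1,\dots,J_0$, with an analysis at the end of each stage; $n_{0,j}$ denotes the cumulative number of control patients by the end of stage $j$ ($n_{0,0}=0$). Experimental arm $k$ is added at the end of control stage $s(k)\ge 0$ and has analyses $j=1,\dots,J_k$ (with $s(k)+J_k\le J_0$), its $j$-th analysis coinciding with the end of control stage $s(k)+j$; $n_{k,j}$ denotes the cumulative number of patients on arm $k$ by its $j$-th analysis. Only concurrent controls are used: the test statistic for arm $k$ at its $j$-th analysis is $$Z_{k,j}=\frac{n_{k,j}^{-1}\sum_{i=1}^{n_{k,j}}X_{k,i}-(n_{0,s(k)+j}-n_{0,s(k)})^{-1}\sum_{i=n_{0,s(k)}+1}^{n_{0,s(k)+j}}X_{0,i}}{\sigma\sqrt{n_{k,j}^{-1}+(n_{0,s(k)+j}-n_{0,s(k)})^{-1}}},$$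 where $X_{k,i}$ is the outcome of the $i$-th patient on arm $k$. The null hypotheses are $H_{0k}:\mu_k\le\mu_0$, $k=1,\dots,K$. Pre-specified boundaries $l_{k,j}\le u_{k,j}$, $j=1,\dots,J_k$, with $l_{k,J_k}=u_{k,J_k}$, are used as follows: at the $j$-th analysis of an arm $k$ still in the trial, if $Z_{k,j}>u_{k,j}$ then $H_{0k}$ is rejected and the whole trial stops; if $Z_{k,j}<l_{k,j}$ arm $k$ is dropped from all subsequent stages; otherwise arm $k$ (and the control) continue to the next stage. The trial also stops if all arms have been dropped. A hypothesis not rejected by these rules is not rejected. The ''probability of rejecting at least one true $H_{0k}$'' is the probability, under the given means, that this procedure rejects some $H_{0k}$ with $\mu_k\le\mu_0$. *)

From HB Require Import structures.
From mathcomp Require Import all_boot all_order all_algebra.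
From mathcomp Require Import all_classical all_reals all_analysis.
Set Implicit Arguments. Unset Strict Implicit. Unset Printing Implicit Defensive.
Import Order.TTheory GRing.Theory Num.Theory.
Local Open Scope classical_set_scope.
Local Open Scope ring_scope.

(* Arms are indexed by 'I_K.+1; arm ord0 is the common control arm 0,
   arms k <> ord0 are the experimental arms 1..K.  Patients on an arm are
   indexed by nat starting at 0 (patient i in the code = patient i+1 in the
   paper). *)

Definition mutually_independent d (T : measurableType d) (R : realType)
  (P : probability T R) (I : eqType) (Y : I -> T -> R) : Prop :=
  forall (F : seq I) (B : I -> set R), uniq F ->
    (forall i, measurable (B i)) ->
    P (\bigcap_(i in [set` F]) (Y i @^-1` B i)) = (\prod_(i <- F) P (Y i @^-1` B i))%E.

Definition normal_outcomes d (T : measurableType d) (R : realType)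
  (P : probability T R) (K : nat) (mu : 'I_K.+1 -> R) (sigma : R)
  (X : 'I_K.+1 -> nat -> T -> R) : Prop :=
  (forall k i, measurable_fun setT (X k i)) /\
  (forall k i (B : set R), measurable B ->
      P (X k i @^-1` B) = normal_prob (mu k) sigma B) /\
  mutually_independent P (fun p : 'I_K.+1 * nat => X p.1 p.2).

Section Trial.
Context {T : Type} {R : realType} {K : nat}.
Variables (sigma : R) (n0 : nat -> nat) (s J : 'I_K.+1 -> nat)
  (n : 'I_K.+1 -> nat -> nat) (l u : 'I_K.+1 -> nat -> R)
  (X : 'I_K.+1 -> nat -> T -> R).

(** Test statistic Z_{k,j}, using concurrent controls only: the control
    patients recruited during control stages s(k)+1 .. s(k)+j, i.e. the
    (0-indexed) control patients n0(s k) <= i < n0(s k + j). *)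
Definition Zstat (k : 'I_K.+1) (j : nat) (w : T) : R :=
  let nk := (n k j)%:R in
  let nc := (n0 (s k + j) - n0 (s k))%:R in
  ((\sum_(i < n k j) X k i w) / nk
     - (\sum_(n0 (s k) <= i < n0 (s k + j)) X ord0 i w) / nc)
  / (sigma * Num.sqrt (nk^-1 + nc^-1)).

(** Arm k would reject at control stage t (its analysis j = t - s k) if the
    trial had not been stopped by an earlier rejection: the analysis exists,
    the arm was not dropped at any earlier analysis, and Z exceeds u. *)
Definition raw_reject (k : 'I_K.+1) (t : nat) (w : T) : Prop :=
  [/\ (s k < t)%N, (t - s k <= J k)%N,
      (forall j', (1 <= j')%N -> (j' < t - s k)%N -> l k j' <= Zstat k j' w)
    & u k (t - s k) < Zstat k (t - s k) w].

(** H_{0k} is rejected by the procedure: arm k rejects at some stage t at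
    which the trial is still running, i.e. no experimental arm rejected at an
    earlier stage (a rejection stops the whole trial). *)
Definition rejects (k : 'I_K.+1) (w : T) : Prop :=
  k != ord0 /\
  exists t, raw_reject k t w /\
    forall k' t', k' != ord0 -> (t' < t)%N -> ~ raw_reject k' t' w.

Definition reject_true_null (mu : 'I_K.+1 -> R) : set T :=
  [set w | exists k : 'I_K.+1, [/\ k != ord0, mu k <= mu ord0 & rejects k w]].

End Trial.

Definition valid_design {R : realType} (K J0 : nat) (n0 : nat -> nat)
  (s J : 'I_K.+1 -> nat) (n : 'I_K.+1 -> nat -> nat) (l u : 'I_K.+1 -> nat -> R) : Prop :=
  [/\ n0 0 = 0%N,
      (forall j, (j < J0)%N -> (n0 j < n0 j.+1)%N) &
      forall k : 'I_K.+1, k != ord0 ->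
        [/\ (0 < J k)%N /\ (s k + J k <= J0)%N,
            (forall j, (1 <= j <= J k)%N -> (0 < n k j)%N),
            (forall j, (1 <= j < J k)%N -> (n k j <= n k j.+1)%N),
            (forall j, (1 <= j <= J k)%N -> l k j <= u k j)
          & l k (J k) = u k (J k)]].

(* Adding nu - mu_k to every outcome of arm k turns outcomes
   with means mu into outcomes with the law of the global null.  For a true null
   (mu_k <= mu_0) the shift raises every Z_{k,j} by a nonnegative amount, so if
   arm k rejects under mu, it still crosses its upper boundary before being
   dropped on the shifted outcomes.  Under the global null every H_{0k} is true,
   and "some true null is rejected" is just "some arm crosses its upper boundary
   before being dropped": the earliest such crossing is a rejection.  Hence the
   event under mu is contained in an event of the shifted outcomes whose
   probability equals its global-null probability. *)

From HB Require Import structures.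
From mathcomp Require Import all_boot all_order all_algebra.
From mathcomp Require Import all_classical all_reals all_analysis.
From mathcomp Require Import measurable_realfun ring.
Import Order.TTheory GRing.Theory Num.Theory.
Local Open Scope classical_set_scope.
Local Open Scope ring_scope.

Section measurable_predicates.
Context d (T : measurableType d).
Implicit Types (b : Prop) (A : set T).

Lemma measurable_cst_pred b : measurable [set _ : T | b].
Proof.
have [hb|hb] := pselect b.
  by rewrite (_ : [set _ | b] = setT) //; apply/seteqP; split.
by rewrite (_ : [set _ | b] = set0) //; apply/seteqP; split.
Qed.

Lemma measurable_forall (I : countType) (A : I -> set T) :
  (forall i, measurable (A i)) -> measurable [set w | forall i, A i w].
Proof.
move=> mA; rewrite (_ : [set w | _] = \bigcap_i A i); last first.
  by apply/seteqP; split=> w /= Aw i //; exact: Aw.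
rewrite -[X in measurable X]setCK setC_bigcap; apply: measurableC.
by apply: countable_bigcupT_measurable => // i; exact/measurableC.
Qed.

Lemma measurable_exists (I : countType) (A : I -> set T) :
  (forall i, measurable (A i)) -> measurable [set w | exists i, A i w].
Proof.
move=> mA; rewrite (_ : [set w | _] = \bigcup_i A i).
  exact: countable_bigcupT_measurable.
by apply/seteqP; split=> w /= [i]; exists i.
Qed.

Lemma measurable_implyl b A : measurable A -> measurable [set w | b -> A w].
Proof.
move=> mA; rewrite (_ : [set w | _] = ~` [set _ | b] `|` A).
  exact/measurableU/mA/measurableC/measurable_cst_pred.
by apply/seteqP; split=> w /=; [move=> H; have [/H|] := pselect b; [right|left]|case].
Qed.

Lemma measurable_gtf (R : realType) (f : T -> R) a :
  measurable_fun setT f -> measurable [set w | a < f w].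
Proof. by move=> mf; rewrite -preimage_itvoy -[X in measurable X]setTI; exact: mf. Qed.

Lemma measurable_gef (R : realType) (f : T -> R) a :
  measurable_fun setT f -> measurable [set w | a <= f w].
Proof. by move=> mf; rewrite -preimage_itvcy -[X in measurable X]setTI; exact: mf. Qed.

End measurable_predicates.

Definition shift_arms {T : Type} {R : realType} {K : nat} (c : 'I_K.+1 -> R)
  (X : 'I_K.+1 -> nat -> T -> R) : 'I_K.+1 -> nat -> T -> R :=
  fun k i w => X k i w + c k.

Section trial_events.
Context {T : Type} {R : realType} {K J0 : nat}.
Variables (sigma : R) (n0 : nat -> nat) (s J : 'I_K.+1 -> nat)
  (n : 'I_K.+1 -> nat -> nat) (l u : 'I_K.+1 -> nat -> R).

Definition some_arm_crosses (X : 'I_K.+1 -> nat -> T -> R) : set T :=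
  [set w | exists k t, k != ord0 /\ raw_reject sigma n0 s J n l u X k t w].

Lemma reject_true_null_cst (X : 'I_K.+1 -> nat -> T -> R) (nu : R) :
  reject_true_null sigma n0 s J n l u X (fun=> nu) = some_arm_crosses X.
Proof.
apply/seteqP; split=> w /=; first by case=> k [k0 _ [_ [t [Hkt _]]]]; exists k, t.
(* Descend to the earliest stage at which some arm crosses: it is a rejection. *)
case=> k [t [k0 Hkt]]; elim/ltn_ind: t k k0 Hkt => t IHt k k0 Hkt.
have [[k' [t' [k'0 [t't Hk't']]]]|earlier] := pselect (exists k' t',
  [/\ k' != ord0, (t' < t)%N & raw_reject sigma n0 s J n l u X k' t' w]).
  exact: (IHt t' t't k').
exists k; split=> //; split=> //; exists t; split=> // k' t' k'0 t't Hk't'.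
by apply: earlier; exists k', t'.
Qed.

Lemma Zstat_shift_arms (X : 'I_K.+1 -> nat -> T -> R) c k j w :
  sigma != 0 -> (0 < n k j)%N -> (n0 (s k) < n0 (s k + j))%N ->
  Zstat sigma n0 s n (shift_arms c X) k j w = Zstat sigma n0 s n X k j w +
  (c k - c ord0) / (sigma * Num.sqrt ((n k j)%:R^-1 + (n0 (s k + j) - n0 (s k))%:R^-1)).
Proof.
move=> sigma0 nkj nc.
rewrite /Zstat /shift_arms !big_split /= sumr_const card_ord sumr_const_nat.
have Nkj : 0 < (n k j)%:R :> R by rewrite ltr0n.
have Nc : 0 < (n0 (s k + j) - n0 (s k))%:R :> R by rewrite ltr0n subn_gt0.
have D0 : Num.sqrt ((n k j)%:R^-1 + (n0 (s k + j) - n0 (s k))%:R^-1) != 0 :> R.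
  by rewrite gt_eqF // sqrtr_gt0 addr_gt0 // invr_gt0.
by field; rewrite sigma0 D0 !gt_eqF.
Qed.

Lemma Zstat_le_shift_arms (X : 'I_K.+1 -> nat -> T -> R) c k j w :
  0 < sigma -> c ord0 <= c k -> (0 < n k j)%N -> (n0 (s k) < n0 (s k + j))%N ->
  Zstat sigma n0 s n X k j w <= Zstat sigma n0 s n (shift_arms c X) k j w.
Proof.
move=> sigma_gt0 ck nkj nc; rewrite Zstat_shift_arms ?gt_eqF // lerDl.
by rewrite divr_ge0 ?subr_ge0 // mulr_ge0 ?sqrtr_ge0 // ltW.
Qed.

Hypothesis design : valid_design J0 n0 s J n l u.
Hypothesis sigma_gt0 : 0 < sigma.

Lemma n0_lt a b : (a < b <= J0)%N -> (n0 a < n0 b)%N.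
Proof.
have [_ n0S _] := design; move=> /andP[ab bJ0].
have n0_homo : {in [pred j | j <= J0] &, {homo n0 : i j / i < j}}%N.
  apply: homo_ltn_in => [|i j _ jJ0 k /andP[_ kj]|i _ /[!inE] /n0S //].
    exact: ltn_trans.
  by rewrite inE (leq_trans (ltnW kj)).
by apply: n0_homo; rewrite // inE (leq_trans (ltnW ab)).
Qed.

Lemma raw_reject_shift_arms (X : 'I_K.+1 -> nat -> T -> R) c k t w :
  k != ord0 -> c ord0 <= c k -> raw_reject sigma n0 s J n l u X k t w ->
  raw_reject sigma n0 s J n l u (shift_arms c X) k t w.
Proof.
move=> k0 ck [st tJ Hl Hu].
have [_ _ /(_ k k0) [[_ sJ] n_gt0 _ _ _]] := design.
have Zle j : (1 <= j <= J k)%N ->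
    Zstat sigma n0 s n X k j w <= Zstat sigma n0 s n (shift_arms c X) k j w.
  move=> /andP[j1 jJ]; apply: Zstat_le_shift_arms => //; first by apply: n_gt0; rewrite j1.
  by apply: n0_lt; rewrite -{1}[s k]addn0 ltn_add2l j1 (leq_trans _ sJ) // leq_add2l.
split=> // [j j1 jt|].
  by apply: le_trans (Hl j j1 jt) (Zle j _); rewrite j1 (leq_trans (ltnW jt)).
by apply: lt_le_trans Hu (Zle _ _); rewrite tJ subn_gt0 st.
Qed.

Lemma reject_true_null_sub_shift (X : 'I_K.+1 -> nat -> T -> R) mu nu :
  reject_true_null sigma n0 s J n l u X mu `<=`
  some_arm_crosses (shift_arms (fun k => nu - mu k) X).
Proof.
move=> w [k [k0 muk [_ [t [Hkt _]]]]]; exists k, t; split=> //.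
by apply: raw_reject_shift_arms => //; rewrite lerD2l lerN2.
Qed.

End trial_events.

Section trial_measurability.
Context {R : realType} {K : nat} {d : measure_display} {T : measurableType d}.
Variables (sigma : R) (n0 : nat -> nat) (s J : 'I_K.+1 -> nat)
  (n : 'I_K.+1 -> nat -> nat) (l u : 'I_K.+1 -> nat -> R)
  (X : 'I_K.+1 -> nat -> T -> R).
Hypothesis mX : forall k i, measurable_fun setT (X k i).

Local Notation Zstat := (Zstat sigma n0 s n X).
Local Notation raw_reject := (raw_reject sigma n0 s J n l u X).

Lemma measurable_Zstat k j : measurable_fun setT (Zstat k j).
Proof.
apply: measurable_funM => //; apply: measurable_funB;
  by apply: measurable_funM => //; exact: measurable_sum.
Qed.

Lemma measurable_raw_reject k t : measurable [set w | raw_reject k t w].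
Proof.
rewrite (_ : [set w | _] = [set _ | (s k < t)%N] `&` [set _ | (t - s k <= J k)%N] `&`
  [set w | forall j, (1 <= j)%N -> (j < t - s k)%N -> l k j <= Zstat k j w] `&`
  [set w | u k (t - s k) < Zstat k (t - s k) w]); last first.
  by apply/seteqP; split=> w /=; [case|move=> [[[]]]].
apply: measurableI; last exact/measurable_gtf/measurable_Zstat.
apply: measurableI; first by apply: measurableI; exact: measurable_cst_pred.
apply: measurable_forall => j; do 2 apply: measurable_implyl.
exact/measurable_gef/measurable_Zstat.
Qed.

Lemma measurable_rejects k : measurable [set w | rejects sigma n0 s J n l u X k w].
Proof.
apply: measurableI; first exact: measurable_cst_pred.
apply: measurable_exists => t; apply: measurableI; first exact: measurable_raw_reject.
apply: measurable_forall => k'; apply: measurable_forall => t'.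
by do 2 apply: measurable_implyl; exact/measurableC/measurable_raw_reject.
Qed.

Lemma measurable_reject_true_null mu :
  measurable (reject_true_null sigma n0 s J n l u X mu).
Proof.
rewrite (_ : reject_true_null _ _ _ _ _ _ _ _ _ = [set w | exists k,
  ([set _ | k != ord0] `&` [set _ | mu k <= mu ord0] `&`
   [set w | rejects sigma n0 s J n l u X k w]) w]); last first.
  by apply/seteqP; split=> w /= [k]; [case|move=> [[]]]; exists k.
apply: measurable_exists => k; apply: measurableI; last exact: measurable_rejects.
by apply: measurableI; exact: measurable_cst_pred.
Qed.

Lemma measurable_some_arm_crosses :
  measurable (some_arm_crosses sigma n0 s J n l u X).
Proof.
apply: measurable_exists => k; apply: measurable_exists => t.
by apply: measurableI; [exact: measurable_cst_pred|exact: measurable_raw_reject].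
Qed.

End trial_measurability.

Section normal_translation.
Context {R : realType}.
Local Notation mu := (@lebesgue_measure R).

Lemma lebesgue_measure_shift (c : R) (A : set R) : measurable A ->
  mu ((fun x => x + c) @^-1` A) = mu A.
Proof.
move=> mA; apply/esym; apply: (@lebesgue_measure_unique R
  (pushforward mu ((fun x => x + c) : R -> measurableTypeR R))) => //=.
  exact: measurable_funD.
move=> _ _ [[a b] _ <-]; rewrite /pushforward.
rewrite (_ : _ @^-1` _ = `]a - c, b - c]%classic); last first.
  by apply/seteqP; split=> x /=; rewrite !in_itv /= ltrBlDr lerBrDr.
rewrite !lebesgue_measure_itv /= !lte_fin ltrD2r.
by case: ifP => // _; rewrite -!EFinB; congr EFin; ring.
Qed.

Lemma normal_prob_shift (m sigma c : R) (B : set R) : sigma != 0 -> measurable B ->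
  normal_prob m sigma ((fun x => x + c) @^-1` B) = normal_prob (m + c) sigma B.
Proof.
move=> sigma0 mB; have mshift : measurable_fun setT (fun x : R => x + c).
  exact: measurable_funD.
rewrite /normal_prob (@eq_measure_integral _ (measurableTypeR R) _ B
  (pushforward mu ((fun x => x + c) : R -> measurableTypeR R))) //=; last first.
  by move=> A mA _; rewrite /pushforward (lebesgue_measure_shift c A mA).
rewrite ge0_integral_pushforward //=.
- apply: eq_integral => x _; congr EFin.
  by rewrite /normal_pdf (negbTE sigma0) /normal_fun opprD addrACA subrr addr0.
- by apply/measurable_EFinP; apply: measurable_funS (measurable_normal_pdf _ _).
- by move=> y _; rewrite lee_fin normal_pdf_ge0.
Qed.

Lemma measurable_shift_preimage (c : R) (B : set R) : measurable B ->
  measurable ((fun x => x + c) @^-1` B).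
Proof. by move=> mB; rewrite -[X in measurable X]setTI; exact: measurable_funD. Qed.

End normal_translation.

Lemma normal_outcomes_shift (R : realType) (K : nat) d (T : measurableType d)
    (P : probability T R) (mu : 'I_K.+1 -> R) (sigma : R)
    (X : 'I_K.+1 -> nat -> T -> R) (c : 'I_K.+1 -> R) :
  sigma != 0 -> normal_outcomes P mu sigma X ->
  normal_outcomes P (fun k => mu k + c k) sigma (shift_arms c X).
Proof.
move=> sigma0 [mX [lawX indX]]; split; [|split].
- by move=> k i; exact: measurable_funD.
- move=> k i B mB; rewrite -normal_prob_shift //.
  by apply: lawX; exact: measurable_shift_preimage.
- move=> F B uF mB.
  exact: (indX F (fun p => (fun x => x + c p.1) @^-1` B p) uF
    (fun p => measurable_shift_preimage _ _ (mB p))).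
Qed.

Definition paths (I : Type) (R : realType) := I -> R.
HB.instance Definition _ I R := gen_eqMixin (paths I R).
HB.instance Definition _ I R := gen_choiceMixin (paths I R).
HB.instance Definition _ I R := isPointed.Build (paths I R) (fun=> 0).

Definition cylinder {I : eqType} {R : realType} (F : seq I) (B : I -> set R) :
  set (paths I R) := [set x | forall i, i \in F -> B i (x i)].

Definition cylinders (I : eqType) (R : realType) : set (set (paths I R)) :=
  [set A | exists F B, (forall i, measurable (B i)) /\ A = cylinder F B].

(* R^I with the product sigma-algebra. *)
Definition path_space (I : eqType) (R : realType) : measurableType _ :=
  g_sigma_algebraType (cylinders I R).

Section path_space.
Context {I : eqType} {R : realType}.
Local Notation cylinders := (cylinders I R).
Local Notation path_space := (path_space I R).

Lemma setI_closed_cylinders : setI_closed cylinders.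
Proof.
move=> _ _ [F1 [B1 [mB1 ->]]] [F2 [B2 [mB2 ->]]].
pose B i := (if i \in F1 then B1 i else setT) `&` (if i \in F2 then B2 i else setT).
exists (F1 ++ F2), B; split=> [i|]; first by apply: measurableI; case: ifP.
apply/seteqP; split=> x /=.
  by move=> [H1 H2] i _; split; case: ifP => // /[dup] ? ?; [exact: H1|exact: H2].
by move=> H; split=> i iF; have := H i; rewrite mem_cat iF ?orbT => /(_ isT) [];
  rewrite iF.
Qed.

Lemma cylinders_setT : cylinders setT.
Proof. by exists [::], (fun=> setT); split=> //; apply/seteqP; split. Qed.

Lemma measurable_coord (i : I) : measurable_fun setT (fun x : path_space => x i).
Proof.
move=> _ B mB; rewrite setTI; apply: sub_sigma_algebra.
exists [:: i], (fun=> B); split=> //; apply/seteqP; split=> x /=.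
  by move=> Bxi j /[!inE] /eqP ->.
by apply; rewrite mem_head.
Qed.

Context {d : measure_display} {T : measurableType d}.

Definition sample_path (Z : I -> T -> R) (w : T) : path_space := fun i => Z i w.

Lemma sample_path_cylinder (Z : I -> T -> R) F B :
  sample_path Z @^-1` cylinder F B = \bigcap_(i in [set` F]) (Z i @^-1` B i).
Proof. by apply/seteqP; split=> w /= H i; apply: H. Qed.

Lemma measurable_sample_path (Z : I -> T -> R) :
  (forall i, measurable_fun setT (Z i)) -> measurable_fun setT (sample_path Z).
Proof.
move=> mZ; apply: (@measurability _ _ _ path_space setT _ cylinders) => //.
move=> _ [_ [F [B [mB ->]]] <-].
rewrite setTI sample_path_cylinder; apply: fin_bigcap_measurable => // i _.
by rewrite -[X in measurable X]setTI; exact: mZ.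
Qed.

Lemma probability_sample_path_cylinder (P : probability T R) (Z : I -> T -> R) F B :
  mutually_independent P Z -> (forall i, measurable (B i)) ->
  P (sample_path Z @^-1` cylinder F B) = (\prod_(i <- undup F) P (Z i @^-1` B i))%E.
Proof.
move=> indZ mB; rewrite -indZ ?undup_uniq // sample_path_cylinder.
congr (P _); apply/seteqP; split=> w H i iF; apply: H.
all: by move: iF => /=; rewrite mem_undup.
Qed.

End path_space.

Lemma sample_path_law_eq (I : eqType) (R : realType)
    d (T : measurableType d) (P : probability T R) (Z : I -> T -> R)
    d' (T' : measurableType d') (P' : probability T' R) (Z' : I -> T' -> R) :
  (forall i, measurable_fun setT (Z i)) -> (forall i, measurable_fun setT (Z' i)) ->
  mutually_independent P Z -> mutually_independent P' Z' ->
  (forall i B, measurable B -> P (Z i @^-1` B) = P' (Z' i @^-1` B)) ->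
  forall A : set (path_space I R), measurable A ->
  P (sample_path Z @^-1` A) = P' (sample_path Z' @^-1` A).
Proof.
move=> mZ mZ' indZ indZ' lawZ A mA.
have mpZ := measurable_sample_path _ mZ; have mpZ' := measurable_sample_path _ mZ'.
have cover : \bigcup_(k : nat) [set: path_space I R] = setT by rewrite bigcup_const.
have := @measure_unique _ R (path_space I R) (cylinders I R) (fun=> setT) erefl
  setI_closed_cylinders (fun=> cylinders_setT) cover (pushforward P (sample_path Z))
  (pushforward P' (sample_path Z')).
apply=> //.
- move=> _ [F [B [mB ->]]].
  change (P (sample_path Z @^-1` cylinder F B) = P' (sample_path Z' @^-1` cylinder F B)).
  rewrite !probability_sample_path_cylinder //.
  by apply: eq_bigr => i _; exact: lawZ.
- move=> _; change (P (sample_path Z @^-1` setT) < +oo)%E.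
  by rewrite preimage_setT probability_setT ltry.
Qed.

Definition coord_outcomes (R : realType) (K : nat) :
  'I_K.+1 -> nat -> path_space ('I_K.+1 * nat)%type R -> R :=
  fun k i x => x (k, i).

Lemma normal_outcomes_sample_path_law_eq {R : realType} {K : nat}
    {m : 'I_K.+1 -> R} {sigma : R}
    {d} {T : measurableType d} {P : probability T R} {X : 'I_K.+1 -> nat -> T -> R}
    {d'} {T' : measurableType d'} {P' : probability T' R} {Y : 'I_K.+1 -> nat -> T' -> R} :
  normal_outcomes P m sigma X -> normal_outcomes P' m sigma Y ->
  forall A : set (path_space ('I_K.+1 * nat)%type R), measurable A ->
  P (sample_path (fun p => X p.1 p.2) @^-1` A) =
  P' (sample_path (fun p => Y p.1 p.2) @^-1` A).
Proof.
move=> [mX [lawX indX]] [mY [lawY indY]]; apply: sample_path_law_eq => //.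
by move=> [k i] B mB; rewrite lawX // lawY.
Qed.

Lemma some_arm_crosses_law_eq {R : realType} {K : nat} (sigma : R) (n0 : nat -> nat)
    (s J : 'I_K.+1 -> nat) (n : 'I_K.+1 -> nat -> nat) (l u : 'I_K.+1 -> nat -> R)
    {m : 'I_K.+1 -> R}
    {d} {T : measurableType d} {P : probability T R} {X : 'I_K.+1 -> nat -> T -> R}
    {d'} {T' : measurableType d'} {P' : probability T' R} {Y : 'I_K.+1 -> nat -> T' -> R} :
  normal_outcomes P m sigma X -> normal_outcomes P' m sigma Y ->
  P (some_arm_crosses sigma n0 s J n l u X) = P' (some_arm_crosses sigma n0 s J n l u Y).
Proof.
move=> hX hY; apply: (normal_outcomes_sample_path_law_eq hX hY
  (some_arm_crosses sigma n0 s J n l u (@coord_outcomes R K))).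
by apply: measurable_some_arm_crosses => k i; exact: measurable_coord.
Qed.

Theorem theorem1 (R : realType) (K J0 : nat) (n0 : nat -> nat)
  (s J : 'I_K.+1 -> nat) (n : 'I_K.+1 -> nat -> nat) (l u : 'I_K.+1 -> nat -> R)
  (sigma : R) (mu : 'I_K.+1 -> R) (nu : R)
  (d : measure_display) (T : measurableType d) (P : probability T R)
  (X : 'I_K.+1 -> nat -> T -> R)
  (d' : measure_display) (T' : measurableType d') (P' : probability T' R)
  (Y : 'I_K.+1 -> nat -> T' -> R) :
  valid_design J0 n0 s J n l u ->
  0 < sigma ->
  normal_outcomes P mu sigma X ->
  normal_outcomes P' (fun _ => nu) sigma Y ->
  (P (reject_true_null sigma n0 s J n l u X mu)
     <= P' (reject_true_null sigma n0 s J n l u Y (fun _ => nu)))%E.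
Proof.
move=> design sigma_gt0 hX hY.
have hXc : normal_outcomes P (fun=> nu) sigma (shift_arms (fun k => nu - mu k) X).
  rewrite (_ : (fun=> nu) = fun k => mu k + (nu - mu k)).
    by apply: normal_outcomes_shift; rewrite ?gt_eqF.
  by apply/funext => k; rewrite addrC subrK.
have [[mX _] [mXc _]] := (hX, hXc).
rewrite reject_true_null_cst -(some_arm_crosses_law_eq sigma n0 s J n l u hXc hY).
apply: le_measure; rewrite ?inE.
- exact: measurable_reject_true_null.
- exact: measurable_some_arm_crosses.
- exact: (reject_true_null_sub_shift _ _ _ _ _ _ _ design sigma_gt0 X).
Qed.
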